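(* Let $p\in(0,1/16)$, let $m,n$ be positive integers, and let $D_{mn}(p)=\{q\in(0,1/16):\ \tfrac{15}{16}\le\tfrac{q^n}{p^m}\le\tfrac{16}{15}\}$. Fix $i,j\in\{3,4\}$ and for $q\in(0,1/16)$ and $\sigma,\tau\in I^\infty$ put $\varphi_1(q,\sigma)=S_1^mS_i\pi_{pq}(\sigma)$ and $\varphi_2(q,\tau)=S_2^nS_j\pi_{pq}(\tau)$, where the maps $S_2,S_4$ are those with parameter $q$. Then for all $\sigma,\tau\in I^\infty$ and all $q,q'\in D_{mn}(p)$ with $q\neq q'$, $$|\varphi_1(q,\sigma)-\varphi_2(q,\tau)-\varphi_1(q',\sigma)+\varphi_2(q',\tau)|>11\,p^m|q'-q|.$$
   Context: For $p,q\in(0,1/2)$ let $S_1(x)=px$, $S_2(x)=qx$, $S_3(x)=px+1-p$, $S_4(x)=qx+1-q$, and let $K_{pq}$ be the attractor of $\{S_1,S_2,S_3,S_4\}$ (the unique nonempty compact $K\subset\mathbb R$ with $K=\bigcup_{i=1}^4S_i(K)$). $I=\{1,2,3,4\}$, $I^\infty$ is the set of infinite sequences over $I$, and $\pi_{pq}:I^\infty\to K_{pq}$ sends $\sigma=\sigma_1\sigma_2\dots$ to the unique point of $\bigcap_{k\ge1}S_{\sigma_1}\circ\cdots\circ S_{\sigma_k}(K_{pq})$. *)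

From HB Require Import structures.
From mathcomp Require Import all_boot all_order all_algebra.
From mathcomp Require Import all_classical all_reals all_analysis.
Import numFieldNormedType.Exports.
Set Implicit Arguments. Unset Strict Implicit. Unset Printing Implicit Defensive.
Import Order.TTheory GRing.Theory Num.Theory.
Local Open Scope classical_set_scope.
Local Open Scope ring_scope.

Inductive I4 := s1 | s2 | s3 | s4.

Section IFS.
Variable R : realType.

Definition S (p q : R) (k : I4) (x : R) : R :=
  match k with
  | s1 => p * x
  | s2 => q * x
  | s3 => p * x + 1 - p
  | s4 => q * x + 1 - q
  end.

Definition is_attractor (p q : R) (K : set R) : Prop :=
  compact K /\ K !=set0 /\
  K = S p q s1 @` K `|` S p q s2 @` K `|` S p q s3 @` K `|` S p q s4 @` K.

Definition Kpq (p q : R) : set R := xget set0 (is_attractor p q).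

(* Scomp sigma k x = S_{sigma_1} o ... o S_{sigma_k} (x)  (sigma is 0-indexed). *)
Fixpoint Scomp (p q : R) (sigma : nat -> I4) (k : nat) (x : R) : R :=
  match k with
  | 0 => x
  | k'.+1 => Scomp p q sigma k' (S p q (sigma k') x)
  end.

Definition pi_pq (p q : R) (sigma : nat -> I4) : R :=
  xget 0 [set x | forall k : nat, (Scomp p q sigma k @` Kpq p q) x].

Definition Dmn (m n : nat) (p : R) : set R :=
  [set q | 0 < q < 1/16 /\ 15/16 <= q ^+ n / p ^+ m <= 16/15].

Definition phi1 (p : R) (m : nat) (i : I4) (q : R) (sigma : nat -> I4) : R :=
  iter m (S p q s1) (S p q i (pi_pq p q sigma)).
Definition phi2 (p : R) (n : nat) (j : I4) (q : R) (tau : nat -> I4) : R :=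
  iter n (S p q s2) (S p q j (pi_pq p q tau)).

End IFS.

From HB Require Import structures.
From mathcomp Require Import all_boot all_order all_algebra.
From mathcomp Require Import all_classical all_reals all_analysis.
From mathcomp Require Import ring lra.
Import numFieldNormedType.Exports.
Import Order.TTheory GRing.Theory Num.Theory.
Set Implicit Arguments. Unset Strict Implicit. Unset Printing Implicit Defensive.
Local Open Scope classical_set_scope.
Local Open Scope ring_scope.

(* Each S_k maps [0, 1] into itself with slope at most 1/16, so K_pq lies in
   [0, 1] and pi_pq(s) = S_{s_0}(pi_pq(s_1 s_2 ...)).  On [0, 1], replacing q
   by q' moves every S_k by at most |q - q'|, so iterating this identity makes
   q |-> pi_pq(s) Lipschitz with constant (1 - 1/16)^-1 = 16/15.  Hence in
   phi_1(q) - phi_2(q) - phi_1(q') + phi_2(q') all terms are of size at most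
   (16/15 + (16/15)^2) p^m |q - q'|, except (q'^n - q^n) S_j pi_pq'(tau).  As
   S_j pi >= 15/16 and q^n, q'^n are within a factor 16/15 of p^m with
   q, q' < 1/16, this term exceeds 15 * 15/16 * p^m |q - q'|. *)

Section NonincreasingSets.
Variable T : Type.
Implicit Types A B F : nat -> set T.

Lemma nonincreasing_sets F : (forall k, F k.+1 `<=` F k) ->
  forall k l, (k <= l)%N -> F l `<=` F k.
Proof.
move=> FS k l; apply: (@homo_leq _ F (fun X Y => Y `<=` X)) => // [X|Y X Z YX ZY].
  exact: subset_refl.
exact: subset_trans ZY YX.
Qed.

Lemma bigcapU_nonincreasing A B :
  (forall k, A k.+1 `<=` A k) -> (forall k, B k.+1 `<=` B k) ->
  \bigcap_k (A k `|` B k) `<=` \bigcap_k A k `|` \bigcap_k B k.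
Proof.
move=> AS BS x ABx; have [Ax|] := pselect (forall k, A k x).
  by left=> k _; exact: Ax.
move=> /existsNP[k0 nAx]; right=> k _.
have [Ax|Bx] := ABx (maxn k k0) I.
  by case: (nAx (nonincreasing_sets AS (leq_maxr k k0) Ax)).
exact: (nonincreasing_sets BS (leq_maxl k k0)).
Qed.

Lemma bigcap_image_inj (U : Type) (f : T -> U) F : injective f ->
  \bigcap_k f @` F k `<=` f @` \bigcap_k F k.
Proof.
move=> f_inj x fFx; have [y _ fyx] := fFx 0%N I.
exists y => // k _; have [z Fz fzx] := fFx k I.
by rewrite -(f_inj _ _ (etrans fzx (esym fyx))).
Qed.

End NonincreasingSets.

Lemma compact_nonincreasing_bigcap (T : ptopologicalType) (F : nat -> set T) :
  compact (F 0%N) -> (forall k, closed (F k)) -> (forall k, F k.+1 `<=` F k) ->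
  (forall k, F k !=set0) -> \bigcap_k F k !=set0.
Proof.
move=> cF0 clF FS Fne; move: cF0; rewrite compact_In0 => /(_ nat setT F); apply.
  exists F => // k _; rewrite setIidr //.
  exact: (nonincreasing_sets FS (leq0n k)).
move=> D _; have [x Fx] := Fne (\max_(k <- finmap.enum_fset D) k).
exists x => k /= kD; apply: (nonincreasing_sets FS _ Fx).
exact: (@leq_bigmax_seq _ _ predT id).
Qed.

Lemma le_geometric (R : realType) (r C a b : R) : `|r| < 1 ->
  (forall k, a <= b + C * r ^+ k) -> a <= b.
Proof.
move=> r1 le_ab; rewrite -subr_le0.
have CrE : C * r ^+ k @[k --> \oo] --> 0.
  by rewrite -(mulr0 C); apply: cvgM; [exact: cvg_cst | exact: cvg_expr].
rewrite -(cvg_lim _ CrE) //; apply: limr_ge; first by apply/cvg_ex; exists 0.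
by near=> k; rewrite lerBlDl.
Unshelve. all: by end_near.
Qed.

Section Maps.
Variables (R : realType) (p q : R).

Definition S_slope (k : I4) : R := match k with s1 | s3 => p | s2 | s4 => q end.
Definition S_offset (k : I4) : R :=
  match k with s1 | s2 => 0 | s3 => 1 - p | s4 => 1 - q end.

Lemma S_affine k x : S p q k x = S_slope k * x + S_offset k.
Proof. by case: k => /=; rewrite ?addr0 // addrA. Qed.

Lemma continuous_S k : continuous (S p q k).
Proof.
rewrite (funext (S_affine k)) => x.
by apply: continuousD; [apply: continuousM; [exact: cst_continuous|] |exact: cst_continuous].
Qed.

Lemma continuous_Scomp s k : continuous (Scomp p q s k).
Proof.
elim: k => [|k IH] x /=; first exact: (fun _ h => h).
by apply: continuous_comp; [exact: continuous_S | exact: IH].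
Qed.

Lemma S_inj k : p != 0 -> q != 0 -> injective (S p q k).
Proof.
move=> p0 q0 x y; rewrite !S_affine => /addIr /mulfI; apply.
by case: k.
Qed.

Lemma S_itv01 k x : 0 <= p <= 1 -> 0 <= q <= 1 -> 0 <= x <= 1 -> 0 <= S p q k x <= 1.
Proof. by move=> hp hq hx; case: k => /=; nra. Qed.

Lemma Scomp_shift s k x :
  Scomp p q s k.+1 x = S p q (s 0%N) (Scomp p q (fun n => s n.+1) k x).
Proof. by elim: k x => [|k IH] x //=; rewrite -IH. Qed.

End Maps.

Section Attractor.
Variables (R : realType) (p q : R).

Definition hutchinson (A : set R) : set R :=
  S p q s1 @` A `|` S p q s2 @` A `|` S p q s3 @` A `|` S p q s4 @` A.

Lemma hutchinsonP A x :
  hutchinson A x <-> exists k, exists2 y, A y & S p q k y = x.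
Proof.
split=> [[[[]|]|]|[k [y Ay <-]]]; try by move=> [y Ay <-]; eexists; exists y.
by case: k; [left; left; left|left; left; right|left; right|right]; exists y.
Qed.

Lemma hutchinson_sub A B : A `<=` B -> hutchinson A `<=` hutchinson B.
Proof. by move=> AB; repeat apply: setUSS; exact: image_subset. Qed.

Lemma compact_hutchinson A : compact A -> compact (hutchinson A).
Proof.
move=> cA; repeat apply: compactU; apply: continuous_compact => //;
  apply: continuous_subspaceT; exact: continuous_S.
Qed.

Lemma bigcap_hutchinson (F : nat -> set R) : p != 0 -> q != 0 ->
  (forall k, F k.+1 `<=` F k) ->
  \bigcap_k hutchinson (F k) `<=` hutchinson (\bigcap_k F k).
Proof.
move=> p0 q0 FS.
have SFS k : forall n, S p q k @` F n.+1 `<=` S p q k @` F n.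
  by move=> n; apply: image_subset.
have img k := bigcap_image_inj (F := F) (S_inj (k := k) p0 q0).
have S12 n := setUSS (SFS s1 n) (SFS s2 n).
have S123 n := setUSS (S12 n) (SFS s3 n).
move=> x Hx; have [|/img] := bigcapU_nonincreasing S123 (SFS s4) Hx; last by right.
case/(bigcapU_nonincreasing S12 (SFS s3)) => [|/img]; last by left; right.
case/(bigcapU_nonincreasing (SFS s1) (SFS s2)) => /img Sx.
  by left; left; left.
by left; left; right.
Qed.

Lemma attractor_S K k x : is_attractor p q K -> K x -> K (S p q k x).
Proof.
by move=> [_ [_ eK]] Kx; rewrite eK; apply/hutchinsonP; exists k, x.
Qed.

Lemma attractor_sub_itv01 K : 0 <= p < 1 -> 0 <= q < 1 ->
  is_attractor p q K -> K `<=` `[0, 1]%classic.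
Proof.
move=> hp hq [cK [K0 eK]].
have idK : {within K, continuous (@id R)}.
  by apply: continuous_subspaceT => x; exact: cvg_id.
have [M /set_mem KM geM] := compact_EVT_max K0 cK idK.
have [m /set_mem Km lem] := compact_EVT_min K0 cK idK.
have M1 : M <= 1.
  move: KM; rewrite eK => /hutchinsonP[k [y Ky SyM]].
  have := geM y (mem_set Ky); rewrite -SyM /=.
  by case: k {SyM} => /=; nra.
have m0 : 0 <= m.
  move: Km; rewrite eK => /hutchinsonP[k [y Ky Sym]].
  have := lem y (mem_set Ky); rewrite -Sym /=.
  by case: k {Sym} => /=; nra.
move=> x Kx; rewrite /= in_itv /=.
have := geM x (mem_set Kx); have := lem x (mem_set Kx); rewrite /=.
lra.
Qed.

Lemma hutchinson_itv01 : 0 <= p <= 1 -> 0 <= q <= 1 ->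
  hutchinson `[0, 1]%classic `<=` `[0, 1]%classic.
Proof.
move=> hp hq x /hutchinsonP[k [y /= y01 <-]].
by rewrite in_itv /=; apply: S_itv01; rewrite -?in_itv.
Qed.

Lemma attractor_exists : 0 < p < 1 -> 0 < q < 1 -> exists K, is_attractor p q K.
Proof.
move=> hp hq; pose F k := iter k hutchinson (`[0, 1]%classic : set R).
have FS k : F k.+1 `<=` F k.
  elim: k => [|k IH]; last exact: hutchinson_sub.
  by apply: hutchinson_itv01; lra.
have F0 k : F k 0.
  elim: k => [|k IH] /=; first by rewrite in_itv /=; lra.
  by apply/hutchinsonP; exists s1, 0 => //=; rewrite mulr0.
have cF k : compact (F k).
  by elim: k => [|k IH]; [exact: segment_compact | exact: compact_hutchinson].
exists (\bigcap_k F k); split; [|split].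
- apply: (subclosed_compact _ (cF 0%N)); last by move=> x /(_ 0%N I).
  apply: closed_bigI => k _.
  by apply: compact_closed; [exact: norm_hausdorff | exact: cF].
- by exists 0 => k _.
- apply/seteqP; split=> x.
    move=> Fx; apply: (bigcap_hutchinson _ _ FS); rewrite ?gt_eqF //; try lra.
    by move=> k _; exact: (Fx k.+1 I).
  move=> HFx k _; apply: FS; apply: hutchinson_sub HFx.
  by move=> y /(_ k I).
Qed.

Lemma is_attractor_Kpq : 0 < p < 1 -> 0 < q < 1 -> is_attractor p q (Kpq p q).
Proof. by move=> hp hq; apply: xgetPex; exact: attractor_exists. Qed.

End Attractor.

Section Coding.
Variables (R : realType) (r p : R).
Hypotheses (r_lt1 : r < 1) (hp : 0 < p <= r).

Definition cylinder_cap (q : R) (s : nat -> I4) : set R :=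
  [set x | forall k, (Scomp p q s k @` Kpq p q) x].

Let r_ge0 : 0 <= r. Proof. by have := hp; lra. Qed.

Let p_lt1 : 0 < p < 1. Proof. by have := hp; have := r_lt1; lra. Qed.

Let is_attractor_Kpq_le q : 0 < q <= r -> is_attractor p q (Kpq p q).
Proof. by move=> hq; apply: is_attractor_Kpq => //; have := r_lt1; lra. Qed.

Lemma norm_slope_le q k : 0 <= q <= r -> `|S_slope p q k| <= r.
Proof. by move=> hq; have := hp; case: k => /= hp'; rewrite ger0_norm; lra. Qed.

Lemma S_contraction q k x y : 0 <= q <= r ->
  `|S p q k x - S p q k y| <= r * `|x - y|.
Proof.
move=> hq; have -> : S p q k x - S p q k y = S_slope p q k * (x - y).
  by rewrite !S_affine; ring.
rewrite normrM.
by apply: ler_wpM2r => //; exact: norm_slope_le.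
Qed.

Lemma Scomp_lipschitz q s k x y : 0 <= q <= r ->
  `|Scomp p q s k x - Scomp p q s k y| <= r ^+ k * `|x - y|.
Proof.
move=> hq; elim: k x y => [|k IH] x y /=; first by rewrite expr0 mul1r.
apply: (le_trans (IH _ _)); rewrite exprS -mulrA mulrCA.
by apply: ler_wpM2l; [exact: exprn_ge0 | exact: S_contraction].
Qed.

Lemma S_lipschitz_param q q' k x x' : 0 <= q <= r -> 0 <= x' <= 1 ->
  `|S p q k x - S p q' k x'| <= r * `|x - x'| + `|q - q'|.
Proof.
move=> hq hx'.
have [w w1 ->] : exists2 w, `|w| <= 1 &
    S p q k x - S p q' k x' = S_slope p q k * (x - x') + (q - q') * w.
  case: k; [exists 0 | exists x' | exists 0 | exists (x' - 1)] => /=;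
    rewrite ?normr0 ?ler_norml //; try lra; ring.
apply: (le_trans (ler_normD _ _)); rewrite !normrM; apply: lerD.
  by apply: ler_wpM2r => //; exact: norm_slope_le.
by rewrite -[leRHS]mulr1; apply: ler_wpM2l.
Qed.

Lemma S_right_ge q k x : k = s3 \/ k = s4 -> 0 <= q <= r -> 0 <= x ->
  1 - r <= S p q k x.
Proof. by move=> [] -> /= hq hx; have := hp; nra. Qed.

Lemma Kpq_itv01 q : 0 < q <= r -> Kpq p q `<=` `[0, 1]%classic.
Proof.
move=> hq; apply: attractor_sub_itv01 (is_attractor_Kpq_le hq).
  by have := p_lt1; lra.
by have := r_lt1; lra.
Qed.

Lemma cylinder_cap_nonempty q s : 0 < q <= r -> cylinder_cap q s !=set0.
Proof.
move=> hq; have aK := is_attractor_Kpq_le hq; have [cK [K0 _]] := aK.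
pose F k := Scomp p q s k @` Kpq p q.
have cF k : compact (F k).
  by apply: continuous_compact => //; apply: continuous_subspaceT; exact: continuous_Scomp.
have [|k|k|k|x Fx] := compact_nonincreasing_bigcap (F := F); first exact: cF.
- by apply: compact_closed; [exact: norm_hausdorff | exact: cF].
- by move=> _ [y Ky <-]; exists (S p q (s k) y) => //; exact: attractor_S.
- by have [y Ky] := K0; exists (Scomp p q s k y), y.
- by exists x => k; exact: Fx.
Qed.

Lemma cylinder_cap_unique q s x y : 0 < q <= r ->
  cylinder_cap q s x -> cylinder_cap q s y -> x = y.
Proof.
move=> hq Cx Cy; apply/eqP; rewrite -subr_eq0 -normr_le0.
apply: (le_geometric (r := r) (C := 1)); first by rewrite ger0_norm.
move=> k; have [u Ku <-] := Cx k; have [v Kv <-] := Cy k.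
apply: (le_trans (Scomp_lipschitz _ _ _ _ _)); first lra.
have := Kpq_itv01 hq Ku; have := Kpq_itv01 hq Kv; rewrite /= !in_itv /= => v01 u01.
have : `|u - v| <= 1 by rewrite ler_norml; lra.
have := exprn_ge0 k r_ge0; nra.
Qed.

Lemma pi_pq_cylinder q s : 0 < q <= r -> cylinder_cap q s (pi_pq p q s).
Proof. by move=> hq; apply: xgetPex; exact: cylinder_cap_nonempty. Qed.

Lemma pi_pq_itv01 q s : 0 < q <= r -> 0 <= pi_pq p q s <= 1.
Proof.
move=> hq; have [y Ky <-] := pi_pq_cylinder s hq 0%N.
by have := Kpq_itv01 hq Ky; rewrite /= in_itv.
Qed.

Lemma pi_pq_shift q s : 0 < q <= r ->
  pi_pq p q s = S p q (s 0%N) (pi_pq p q (fun n => s n.+1)).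
Proof.
move=> hq; apply: (cylinder_cap_unique hq (pi_pq_cylinder s hq)) => -[|k].
  exists (S p q (s 0%N) (pi_pq p q (fun n => s n.+1))) => //.
  have [y Ky <-] := pi_pq_cylinder (fun n => s n.+1) hq 0%N.
  exact: attractor_S (is_attractor_Kpq_le hq) Ky.
have [y Ky Hy] := pi_pq_cylinder (fun n => s n.+1) hq k.
by exists y => //; rewrite Scomp_shift Hy.
Qed.

Lemma pi_pq_lipschitz q q' s : 0 < q <= r -> 0 < q' <= r ->
  `|pi_pq p q s - pi_pq p q' s| <= `|q - q'| / (1 - r).
Proof.
move=> hq hq'; set c := `|q - q'| / (1 - r).
have c0 : 0 <= c by rewrite divr_ge0 // subr_ge0 ltW.
have rc : r * c + `|q - q'| = c by rewrite /c; field; rewrite subr_eq0 gt_eqF.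
apply: (le_geometric (r := r) (C := 1)); first by rewrite ger0_norm.
move=> k; elim: k s => [|k IH] s.
  have := pi_pq_itv01 s hq; have := pi_pq_itv01 s hq'.
  have := ler_norml (pi_pq p q s - pi_pq p q' s) 1; rewrite expr0; lra.
rewrite (pi_pq_shift s hq) (pi_pq_shift s hq').
apply: (le_trans (S_lipschitz_param _ _ _ _ (pi_pq_itv01 _ hq'))); first lra.
have := IH (fun n => s n.+1); rewrite exprS; nra.
Qed.

Lemma S_pi_pq_lipschitz q q' k s : 0 < q <= r -> 0 < q' <= r ->
  `|S p q k (pi_pq p q s) - S p q' k (pi_pq p q' s)| <= `|q - q'| / (1 - r).
Proof.
move=> hq hq'; set c := `|q - q'| / (1 - r).
have rc : r * c + `|q - q'| = c by rewrite /c; field; rewrite subr_eq0 gt_eqF.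
apply: (le_trans (S_lipschitz_param _ _ _ _ (pi_pq_itv01 _ hq'))); first lra.
by rewrite -[leRHS]rc lerD2r ler_wpM2l // pi_pq_lipschitz.
Qed.

End Coding.

Lemma subrXX_ge (R : realDomainType) (a b : R) n : 0 <= a <= b ->
  (b - a) * b ^+ n <= b ^+ n.+1 - a ^+ n.+1.
Proof.
move=> /andP[a0 ab]; have b0 : 0 <= b := le_trans a0 ab.
have : a ^+ n <= b ^+ n by apply: lerXn2r; rewrite ?nnegrE.
by rewrite !exprS; nra.
Qed.

Lemma dist_exprS_gt (R : realFieldType) (rho c x y : R) n : 0 < c ->
  0 < x < rho -> 0 < y < rho -> x != y -> c <= x ^+ n.+1 -> c <= y ^+ n.+1 ->
  c / rho * `|x - y| < `|x ^+ n.+1 - y ^+ n.+1|.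
Proof.
move=> c0; wlog xy : x y / x < y.
  move=> sym hx hy xy cx cy; have [lt|gt|eq] := ltgtP x y.
  - exact: sym.
  - by rewrite distrC [ltRHS]distrC; apply: sym; rewrite // eq_sym.
  - by rewrite eq eqxx in xy.
move=> hx hy _ _ cy.
have yn0 : 0 < y ^+ n by apply: exprn_gt0; lra.
have cy_lt : c / rho < y ^+ n.
  by rewrite ltr_pdivrMr; [move: cy; rewrite exprS; nra | lra].
have yx : 0 < y - x by rewrite subr_gt0.
rewrite distrC [ltRHS]distrC (gtr0_norm yx).
apply: (lt_le_trans _ (ler_norm _)); apply: (lt_le_trans _ (subrXX_ge n _)).
  by rewrite mulrC ltr_pM2l // subr_gt0.
lra.
Qed.

(* 11 < 15 * 15/16 - 16/15 - (16/15)^2. *)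
Lemma separation_estimate (R : realFieldType) (P Q Q' u u' v v' d : R) :
  0 < P -> 0 <= Q <= 16/15 * P -> 15 * P * d < `|Q - Q'| ->
  `|u - u'| <= 16/15 * d -> `|v - v'| <= 16/15 * d -> 15/16 <= v' ->
  11 * P * d < `|P * u - Q * v - P * u' + Q' * v'|.
Proof.
move=> P0 hQ hQQ hu hv hv'.
have d0 : 0 <= d by have := normr_ge0 (u - u'); lra.
have hX : 225/16 * (P * d) < `|(Q' - Q) * v'|.
  rewrite normrM distrC (ger0_norm (_ : 0 <= v')); last lra.
  have := normr_ge0 (Q - Q'); nra.
have hZ : `|P * (u - u')| <= 16/15 * (P * d).
  by rewrite normrM gtr0_norm //; nra.
have hY : `|Q * (v - v')| <= 256/225 * (P * d).
  by rewrite normrM ger0_norm; [have := normr_ge0 (v - v'); nra | lra].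
have -> : P * u - Q * v - P * u' + Q' * v' =
  (Q' - Q) * v' + (P * (u - u') - Q * (v - v')) by ring.
apply: (lt_le_trans _ (lerB_normD _ _)).
have := ler_normB (P * (u - u')) (Q * (v - v')).
have : 0 <= P * d by apply: mulr_ge0; lra.
rewrite -mulrA; lra.
Qed.

Lemma phi1E (R : realType) (p q : R) m i s :
  phi1 p m i q s = p ^+ m * S p q i (pi_pq p q s).
Proof. by rewrite /phi1; elim: m => [|m IH]; rewrite ?expr0 ?mul1r //= IH exprS mulrA. Qed.

Lemma phi2E (R : realType) (p q : R) n j s :
  phi2 p n j q s = q ^+ n * S p q j (pi_pq p q s).
Proof. by rewrite /phi2; elim: n => [|n IH]; rewrite ?expr0 ?mul1r //= IH exprS mulrA. Qed.

Lemma Dmn_bounds (R : realType) m n (p q : R) : 0 < p -> Dmn m n p q ->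
  0 < q < 1/16 /\ 15/16 * p ^+ m <= q ^+ n <= 16/15 * p ^+ m.
Proof.
move=> p0 [hq /andP[lo hi]]; have pm0 : 0 < p ^+ m := exprn_gt0 m p0.
by rewrite ler_pdivlMr // in lo; rewrite ler_pdivrMr // in hi; rewrite lo hi.
Qed.

Theorem lemma16 (R : realType) (p : R) (m n : nat) (i j : I4) :
  0 < p < 1/16 -> (0 < m)%N -> (0 < n)%N ->
  (i = s3 \/ i = s4) -> (j = s3 \/ j = s4) ->
  forall (sigma tau : nat -> I4) (q q' : R),
    Dmn m n p q -> Dmn m n p q' -> q != q' ->
    11 * p ^+ m * `|q' - q| <
    `|phi1 p m i q sigma - phi2 p n j q tau - phi1 p m i q' sigma + phi2 p n j q' tau|.
Proof.
move=> hp _ n0 _ hj sigma tau q q' Dq Dq' qq'.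
have p0 : 0 < p by case/andP: hp.
have [hq /andP[Qlo Qhi]] := Dmn_bounds p0 Dq.
have [hq' /andP[Qlo' Qhi']] := Dmn_bounds p0 Dq'.
have r1 : 1/16 < 1 :> R by lra.
have hp1 : 0 < p <= 1/16 by lra.
have hq1 : 0 < q <= 1/16 by lra.
have hq1' : 0 < q' <= 1/16 by lra.
have hq0' : 0 <= q' <= 1/16 by lra.
have lip k s : `|S p q k (pi_pq p q s) - S p q' k (pi_pq p q' s)| <= 16/15 * `|q' - q|.
  have -> : 16/15 * `|q' - q| = `|q - q'| / (1 - 1/16) by rewrite distrC; field.
  exact: S_pi_pq_lipschitz.
clear Dq Dq'; case: n n0 Qlo Qhi Qlo' Qhi' => // n _ Qlo Qhi Qlo' Qhi'.
rewrite !phi1E !phi2E.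
apply: separation_estimate => //; first exact: exprn_gt0.
- by rewrite Qhi andbT; apply: exprn_ge0; lra.
- have -> : 15 * p ^+ m = 15/16 * p ^+ m / (1/16) by field.
  by rewrite distrC; apply: dist_exprS_gt => //; rewrite mulr_gt0 ?exprn_gt0.
- have /andP[pi0 _] := pi_pq_itv01 r1 hp1 tau hq1'.
  by have := S_right_ge hp1 hj hq0' pi0; lra.
Qed.
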